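(* Let $C$ be a weak 2-group, let $x\in C$, and let $\bar x\in C$ be an object equipped with isomorphisms $i_x\colon 1\to x\otimes\bar x$ and $e_x\colon\bar x\otimes x\to 1$. Consider the two morphisms $A,B\colon 1\to x\otimes\bar x$ defined as composites $$A\colon\ 1\xrightarrow{i_x}x\otimes\bar x\xrightarrow{\cong}x\otimes(1\otimes\bar x)\xrightarrow{1_x\otimes(e_x^{-1}\otimes 1_{\bar x})}x\otimes((\bar x\otimes x)\otimes\bar x)\xrightarrow{\cong}(x\otimes\bar x)\otimes(x\otimes\bar x)\xrightarrow{i_x^{-1}\otimes 1_{x\otimes\bar x}}1\otimes(x\otimes\bar x)\xrightarrow{\cong}x\otimes\bar x,$$ $$B\colon\ 1\xrightarrow{i_x}x\otimes\bar x\xrightarrow{\cong}(x\otimes 1)\otimes\bar x\xrightarrow{(1_x\otimes e_x^{-1})\otimes 1_{\bar x}}(x\otimes(\bar x\otimes x))\otimes\bar x\xrightarrow{\cong}(x\otimes\bar x)\otimes(x\otimes\bar x)\xrightarrow{1_{x\otimes\bar x}\otimes i_x^{-1}}(x\otimes\bar x)\otimes 1\xrightarrow{\cong}x\otimes\bar x,$$ where each unlabeled arrow $\cong$ is the canonical isomorphism built from associators and left/right unitors (unique by Mac Lane's coherence theorem). Then $A=B$.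
   Context: A weak 2-group is a weak monoidal category (with associator, left and right unitors, unit object $1$) in which every morphism is invertible and every object $x$ admits an object $y$ with $x\otimes y\cong 1\cong y\otimes x$. *)

(* Plain Rocq (no library): weak monoidal categories and weak 2-groups.
   Composition is written in diagrammatic order:  f ;; g  means "first f, then g". *)
Set Implicit Arguments.
Unset Strict Implicit.

Record Category := {
  Obj :> Type;
  Hom : Obj -> Obj -> Type;
  idm : forall a, Hom a a;
  comp : forall a b c, Hom a b -> Hom b c -> Hom a c;
  comp_id_l : forall a b (f : Hom a b), comp (idm a) f = f;
  comp_id_r : forall a b (f : Hom a b), comp f (idm b) = f;
  comp_assoc : forall a b c d (f : Hom a b) (g : Hom b c) (h : Hom c d),
      comp (comp f g) h = comp f (comp g h)
}.

Arguments Hom {C} : rename.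
Arguments idm {C} a : rename.
Arguments comp {C a b c} : rename.
Notation "f ;; g" := (comp f g) (at level 40, left associativity).

Definition is_inverse (C : Category) (a b : C) (f : Hom a b) (g : Hom b a) : Prop :=
  f ;; g = idm a /\ g ;; f = idm b.

Record MonoidalCategory := {
  cat :> Category;
  tens : cat -> cat -> cat;
  tensm : forall a b c d, Hom a c -> Hom b d -> Hom (tens a b) (tens c d);
  unit : cat;
  tensm_id : forall a b, tensm (idm a) (idm b) = idm (tens a b);
  tensm_comp : forall a1 a2 a3 b1 b2 b3 (f : Hom a1 a2) (f' : Hom a2 a3)
      (g : Hom b1 b2) (g' : Hom b2 b3),
      tensm (f ;; f') (g ;; g') = tensm f g ;; tensm f' g';
  assoc : forall a b c, Hom (tens (tens a b) c) (tens a (tens b c));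
  assoc_inv : forall a b c, Hom (tens a (tens b c)) (tens (tens a b) c);
  lunit : forall a, Hom (tens unit a) a;
  lunit_inv : forall a, Hom a (tens unit a);
  runit : forall a, Hom (tens a unit) a;
  runit_inv : forall a, Hom a (tens a unit);
  assoc_iso : forall a b c, is_inverse (assoc a b c) (assoc_inv a b c);
  lunit_iso : forall a, is_inverse (lunit a) (lunit_inv a);
  runit_iso : forall a, is_inverse (runit a) (runit_inv a);
  assoc_nat : forall a a' b b' c c' (f : Hom a a') (g : Hom b b') (h : Hom c c'),
      tensm (tensm f g) h ;; assoc a' b' c' = assoc a b c ;; tensm f (tensm g h);
  lunit_nat : forall a a' (f : Hom a a'),
      tensm (idm unit) f ;; lunit a' = lunit a ;; f;
  runit_nat : forall a a' (f : Hom a a'),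
      tensm f (idm unit) ;; runit a' = runit a ;; f;
  pentagon : forall w x y z,
      tensm (assoc w x y) (idm z) ;; assoc w (tens x y) z ;; tensm (idm w) (assoc x y z)
      = assoc (tens w x) y z ;; assoc w x (tens y z);
  triangle : forall x y,
      assoc x unit y ;; tensm (idm x) (lunit y) = tensm (runit x) (idm y)
}.

Arguments tens {M} : rename.
Arguments tensm {M a b c d} : rename.
Arguments unit {M} : rename.
Arguments assoc {M} : rename.
Arguments assoc_inv {M} : rename.
Arguments lunit {M} : rename.
Arguments lunit_inv {M} : rename.
Arguments runit {M} : rename.
Arguments runit_inv {M} : rename.
Notation "a ⊗ b" := (tens a b) (at level 35, right associativity).
Notation "f ⊗m g" := (tensm f g) (at level 35, right associativity).

Definition is_weak_2group (M : MonoidalCategory) : Prop :=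
  (forall (a b : M) (f : Hom a b), exists g : Hom b a, is_inverse f g) /\
  (forall x : M, exists y : M,
      (exists f : Hom (x ⊗ y) unit, exists g, is_inverse f g) /\
      (exists f : Hom (y ⊗ x) unit, exists g, is_inverse f g)).

Section Composites.
Variables (M : MonoidalCategory) (x xb : M).
Variables (ix : Hom unit (x ⊗ xb)) (ix_inv : Hom (x ⊗ xb) unit).
Variables (ex : Hom (xb ⊗ x) unit) (ex_inv : Hom unit (xb ⊗ x)).

(* The composite A; the unlabeled canonical isomorphisms are chosen as
   x⊗x̄ -> x⊗(1⊗x̄) : 1⊗λ^{-1};
   x⊗((x̄⊗x)⊗x̄) -> (x⊗x̄)⊗(x⊗x̄) : (1⊗α) then α^{-1};
   1⊗(x⊗x̄) -> x⊗x̄ : λ. *)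
Definition compA : Hom unit (x ⊗ xb) :=
  ix
  ;; (idm x ⊗m lunit_inv xb)
  ;; (idm x ⊗m (ex_inv ⊗m idm xb))
  ;; (idm x ⊗m assoc xb x xb)
  ;; assoc_inv x xb (x ⊗ xb)
  ;; (ix_inv ⊗m idm (x ⊗ xb))
  ;; lunit (x ⊗ xb).

(* The composite B; canonical isomorphisms:
   x⊗x̄ -> (x⊗1)⊗x̄ : ρ^{-1}⊗1;
   (x⊗(x̄⊗x))⊗x̄ -> (x⊗x̄)⊗(x⊗x̄) : (α^{-1}⊗1) then α;
   (x⊗x̄)⊗1 -> x⊗x̄ : ρ. *)
Definition compB : Hom unit (x ⊗ xb) :=
  ix
  ;; (runit_inv x ⊗m idm xb)
  ;; ((idm x ⊗m ex_inv) ⊗m idm xb)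
  ;; (assoc_inv x xb x ⊗m idm xb)
  ;; assoc (x ⊗ xb) x xb
  ;; (idm (x ⊗ xb) ⊗m ix_inv)
  ;; runit (x ⊗ xb).
End Composites.


(* The composites A and B share their first arrow i_x.  The next four arrows
   of each insert the point e_x^{-1} : 1 -> x̄ ⊗ x between x and x̄ and
   reassociate; by naturality, the triangle and the pentagon, both routes are
   the same morphism x ⊗ x̄ -> (x ⊗ x̄) ⊗ (x ⊗ x̄).  The two tails
   (i_x^{-1} ⊗ 1) ; λ and (1 ⊗ i_x^{-1}) ; ρ agree because both factor through
   i_x^{-1} ⊗ i_x^{-1} followed by λ_1 resp. ρ_1, and λ_1 = ρ_1 (Kelly). *)

Section CategoryFacts.
Context {C : Category}.

Lemma is_inverse_id (a : C) : is_inverse (idm a) (idm a).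
Proof. split; apply comp_id_l. Qed.

Lemma is_inverse_comp {a b c : C} {f : Hom a b} {f' : Hom b a}
    {g : Hom b c} {g' : Hom c b} :
  is_inverse f f' -> is_inverse g g' -> is_inverse (f ;; g) (g' ;; f').
Proof.
  intros [ff' f'f] [gg' g'g]; split.
  - rewrite comp_assoc, <- (comp_assoc g), gg', comp_id_l; exact ff'.
  - rewrite comp_assoc, <- (comp_assoc f'), f'f, comp_id_l; exact g'g.
Qed.

Lemma iso_cancel_l {a b c : C} {p : Hom a b} {q : Hom b a} {f g : Hom b c} :
  is_inverse p q -> p ;; f = p ;; g -> f = g.
Proof.
  intros [_ qp] E.
  rewrite <- (comp_id_l f), <- (comp_id_l g), <- qp, !comp_assoc, E.
  reflexivity.
Qed.

Lemma iso_cancel_r {a b c : C} {p : Hom b c} {q : Hom c b} {f g : Hom a b} :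
  is_inverse p q -> f ;; p = g ;; p -> f = g.
Proof.
  intros [pq _] E.
  rewrite <- (comp_id_r f), <- (comp_id_r g), <- pq, <- !comp_assoc, E.
  reflexivity.
Qed.

Lemma iso_comp_moveR {a b c : C} {p : Hom b c} {q : Hom c b}
    {f : Hom a b} {g : Hom a c} :
  is_inverse p q -> f ;; p = g -> f = g ;; q.
Proof.
  intros [pq _] E. rewrite <- E, comp_assoc, pq, comp_id_r. reflexivity.
Qed.

End CategoryFacts.

Section MonoidalFacts.
Context {M : MonoidalCategory}.

Lemma is_inverse_tensm {a b c d : M} {f : Hom a b} {f' : Hom b a}
    {g : Hom c d} {g' : Hom d c} :
  is_inverse f f' -> is_inverse g g' -> is_inverse (f ⊗m g) (f' ⊗m g').
Proof.
  intros [ff' f'f] [gg' g'g]; split; rewrite <- tensm_comp.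
  - rewrite ff', gg'; apply tensm_id.
  - rewrite f'f, g'g; apply tensm_id.
Qed.

Lemma tensm_idl_comp (w : M) {a b c : M} (f : Hom a b) (g : Hom b c) :
  idm w ⊗m (f ;; g) = (idm w ⊗m f) ;; (idm w ⊗m g).
Proof. rewrite <- tensm_comp, comp_id_l. reflexivity. Qed.

Lemma tensm_idr_comp (w : M) {a b c : M} (f : Hom a b) (g : Hom b c) :
  (f ;; g) ⊗m idm w = (f ⊗m idm w) ;; (g ⊗m idm w).
Proof. rewrite <- tensm_comp, comp_id_l. reflexivity. Qed.

Lemma tensm_unit_l_inj {a b : M} (f g : Hom a b) :
  idm unit ⊗m f = idm unit ⊗m g -> f = g.
Proof.
  intros E. apply (iso_cancel_l (lunit_iso a)).
  rewrite <- !lunit_nat, E. reflexivity.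
Qed.

Lemma tensm_unit_r_inj {a b : M} (f g : Hom a b) :
  f ⊗m idm unit = g ⊗m idm unit -> f = g.
Proof.
  intros E. apply (iso_cancel_l (runit_iso a)).
  rewrite <- !runit_nat, E. reflexivity.
Qed.

Lemma lunit_unit_tens (a : M) : lunit (unit ⊗ a) = idm unit ⊗m lunit a.
Proof.
  apply (iso_cancel_r (lunit_iso a)). rewrite lunit_nat. reflexivity.
Qed.

(* Whiskering by [unit] on the left is faithful, and after precomposing with
   the isomorphism (α ⊗ 1) ; α both sides become ((ρ_1 ⊗ 1) ⊗ 1) ; α, by the
   pentagon and the triangle. *)
Lemma assoc_lunit (a b : M) :
  assoc unit a b ;; lunit (a ⊗ b) = lunit a ⊗m idm b.
Proof.
  apply tensm_unit_l_inj.
  apply (iso_cancel_l (is_inverse_comp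
    (is_inverse_tensm (assoc_iso unit unit a) (is_inverse_id b))
    (assoc_iso unit (unit ⊗ a) b))).
  transitivity (((runit unit ⊗m idm a) ⊗m idm b) ;; assoc unit a b).
  - rewrite tensm_idl_comp, <- comp_assoc, pentagon, comp_assoc, triangle.
    rewrite <- tensm_id, <- assoc_nat. reflexivity.
  - rewrite comp_assoc, <- assoc_nat, <- comp_assoc, <- tensm_idr_comp.
    rewrite triangle. reflexivity.
Qed.

Lemma lunit_runit_unit : lunit (unit : M) = runit unit.
Proof.
  apply tensm_unit_r_inj.
  rewrite <- triangle, <- assoc_lunit, lunit_unit_tens. reflexivity.
Qed.

Lemma lunit_runit_retraction {X : M} (i : Hom unit X) (j : Hom X unit) :
  j ;; i = idm X -> (j ⊗m idm X) ;; lunit X = (idm X ⊗m j) ;; runit X.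
Proof.
  intros ji.
  replace (j ⊗m idm X) with ((j ⊗m j) ;; (idm unit ⊗m i))
    by (rewrite <- tensm_comp, comp_id_r, ji; reflexivity).
  replace (idm X ⊗m j) with ((j ⊗m j) ;; (i ⊗m idm unit))
    by (rewrite <- tensm_comp, comp_id_r, ji; reflexivity).
  rewrite !comp_assoc, lunit_nat, runit_nat, lunit_runit_unit. reflexivity.
Qed.

Lemma runit_inv_assoc (w c : M) :
  (runit_inv w ⊗m idm c) ;; assoc w unit c = idm w ⊗m lunit_inv c.
Proof.
  rewrite <- comp_id_l.
  apply (iso_comp_moveR (is_inverse_tensm (is_inverse_id w) (lunit_iso c))).
  rewrite comp_assoc, triangle.
  exact (proj2 (is_inverse_tensm (runit_iso w) (is_inverse_id c))).
Qed.

Lemma assoc_inv_pentagon (w a b c : M) :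
  assoc_inv w (a ⊗ b) c ;; (assoc_inv w a b ⊗m idm c) ;; assoc (w ⊗ a) b c
  = (idm w ⊗m assoc a b c) ;; assoc_inv w a (b ⊗ c).
Proof.
  apply (iso_comp_moveR (assoc_iso w a (b ⊗ c))).
  rewrite !comp_assoc, <- pentagon, !comp_assoc.
  rewrite <- (comp_assoc (assoc_inv w a b ⊗m idm c)).
  rewrite (proj2 (is_inverse_tensm (assoc_iso w a b) (is_inverse_id c))), comp_id_l.
  rewrite <- comp_assoc, (proj2 (assoc_iso w (a ⊗ b) c)), comp_id_l.
  reflexivity.
Qed.

Lemma insert_point_coherence (w a b c : M) (e : Hom unit (a ⊗ b)) :
  (idm w ⊗m lunit_inv c) ;; (idm w ⊗m (e ⊗m idm c)) ;; (idm w ⊗m assoc a b c)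
  ;; assoc_inv w a (b ⊗ c)
  = (runit_inv w ⊗m idm c) ;; ((idm w ⊗m e) ⊗m idm c) ;; (assoc_inv w a b ⊗m idm c)
  ;; assoc (w ⊗ a) b c.
Proof.
  assert (conj_e : (idm w ⊗m e) ⊗m idm c =
    assoc w unit c ;; (idm w ⊗m (e ⊗m idm c)) ;; assoc_inv w (a ⊗ b) c).
  { apply (iso_comp_moveR (assoc_iso _ _ _)). apply assoc_nat. }
  rewrite conj_e, <- runit_inv_assoc, !comp_assoc, <- assoc_inv_pentagon, !comp_assoc.
  reflexivity.
Qed.

End MonoidalFacts.

Theorem lemma5p2 (M : MonoidalCategory) (HM : is_weak_2group M) (x xb : M)
  (ix : Hom unit (x ⊗ xb)) (ix_inv : Hom (x ⊗ xb) unit)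
  (ex : Hom (xb ⊗ x) unit) (ex_inv : Hom unit (xb ⊗ x))
  (Hi : is_inverse ix ix_inv) (He : is_inverse ex ex_inv) :
  compA ix ix_inv ex_inv = compB ix ix_inv ex_inv.
Proof.
  unfold compA, compB.
  rewrite !comp_assoc, (lunit_runit_retraction ix ix_inv (proj2 Hi)).
  apply f_equal.
  rewrite <- !comp_assoc, insert_point_coherence.
  reflexivity.
Qed.
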